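(* Let $G(\mathcal V,\mathcal E)$ be a finite simple directed graph and $f\ge 0$ an integer, and assume Condition 1 holds for $G$. Let $F\subset\mathcal V$ and $F_1\subset\mathcal V-F$ with $|F|\le f$ and $|F_1|\le f$, and let $S$ be the set of nodes of a source component of the reduced graph $G_{F,F_1}$. Then $S \Rightarrow_{\mathcal V - F} \mathcal V-F-S$.
   Context: For disjoint sets $X,Y\subseteq\mathcal V$ with $Y$ non-empty, $X\rightarrow Y$ means that $X$ contains at least $f+1$ distinct nodes $i$ such that $(i,j)\in\mathcal E$ for some $j\in Y$. Condition 1: for every partition $L,C,R,F$ of $\mathcal V$ (with $C$ or $F$ possibly empty) such that $L,R$ are non-empty and $|F|\le f$, either $L\cup C\rightarrow R$ or $R\cup C\rightarrow L$. Reduced graph: $G_{F,F_1}$ has vertex set $\mathcal V-F$ and edge set $\mathcal E-\{(i,j): i\in F \text{ or } j\in F\}-\{(i,j): i\in F_1\}$ (all edges incident to $F$ and all outgoing edges of nodes in $F_1$ are removed). A directed graph $H$ is partitioned into strongly connected components $H_1,\dots,H_h$ (nodes $i,j$ lie in the same $H_k$ iff there are $(i,j)$- and $(j,i)$-paths using only nodes of $H_k$); the condensation $H^d$ has a vertex $c_k$ per component and an edge $c_k\to c_l$ iff nodes of $H_k$ have directed paths in $H$ to nodes of $H_l$. A component $H_k$ is a source component if $c_k$ is not reachable from any other vertex of $H^d$. An $(X,y)$-path is a directed path (in $G$) from some node of $X$ to the node $y\notin X$; it excludes $F$ if it contains no node of $F$; $(X,y)$-paths are disjoint if they pairwise share only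 $y$. For pairwise disjoint $X,Y,F$ with $|F|\le f$, $X \Rightarrow_{\mathcal V - F} Y$ means: $Y=\emptyset$, or every $y\in Y$ has at least $f+1$ pairwise disjoint $(X,y)$-paths excluding $F$. *)

From mathcomp Require Import all_boot.
Set Implicit Arguments. Unset Strict Implicit. Unset Printing Implicit Defensive.

(* A finite simple directed graph: vertex set = the finType T, edge relation
   E : rel T (no multi-edges by construction; no self-loops as a hypothesis). *)

Definition reaches_f (T : finType) (E : rel T) (f : nat) (X Y : {set T}) : bool :=
  f.+1 <= #|[set i in X | [exists j in Y, E i j]]|.

Definition condition1 (T : finType) (E : rel T) (f : nat) : Prop :=
  forall L C R F : {set T},
    [disjoint L & C] -> [disjoint L & R] -> [disjoint L & F] ->
    [disjoint C & R] -> [disjoint C & F] -> [disjoint R & F] ->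
    L :|: C :|: R :|: F = setT ->
    L != set0 -> R != set0 -> #|F| <= f ->
    reaches_f E f (L :|: C) R || reaches_f E f (R :|: C) L.

Definition redE (T : finType) (E : rel T) (F F1 : {set T}) : rel T :=
  fun i j => [&& E i j, i \notin F, j \notin F & i \notin F1].

Definition scc (T : finType) (R : rel T) (F : {set T}) (i : T) : {set T} :=
  [set j | [&& j \notin F, connect R i j & connect R j i]].

(* S is (the node set of) a source component of the graph (V - F, R):
   a strongly connected component whose condensation vertex is not reachable
   from any other component, i.e. no node outside S has a path into S. *)
Definition source_component (T : finType) (R : rel T) (F S : {set T}) : Prop :=
  (exists2 i, i \notin F & S = scc R F i) /\
  (forall u s, u \notin F -> u \notin S -> s \in S -> ~~ connect R u s).

Definition Xy_path (T : finType) (E : rel T) (X : {set T}) (y : T) (p : seq T)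
  : bool :=
  if p is x :: s then [&& x \in X, path E x s, last x s == y & uniq p]
  else false.

Definition strongly_reaches (T : finType) (E : rel T) (f : nat)
  (X Y F : {set T}) : Prop :=
  Y = set0 \/
  forall y, y \in Y ->
    exists ps : seq (seq T),
      [/\ size ps = f.+1,
          (forall p, p \in ps -> Xy_path E X y p /\ [disjoint p & F]) &
          (forall i j, i < size ps -> j < size ps -> i != j ->
             forall v, v \in nth [::] ps i -> v \in nth [::] ps j -> v = y)].

From mathcomp Require Import all_boot.
From Stdlib Require Import Classical.
Set Implicit Arguments. Unset Strict Implicit. Unset Printing Implicit Defensive.

(* Fix y outside F and S, and let B be the in-neighbours of y in G - F - y.
   By Menger's theorem it suffices that every vertex set X separating S from B
   in G - F - y has more than f elements. If |X| <= f, let R be y together with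
   the vertices that reach B outside X, and apply Condition 1 to the partition
   (S, C, R, F), C being the rest: a node of S u C with an edge into R must lie
   in X, and a node of R u C with an edge into the source component S must have
   lost its outgoing edges, i.e. lie in F1. Both sets have at most f elements. *)

Section Menger.
Variable T : finType.
Implicit Types (g : {set T * T}) (A B X Z : {set T}) (a x y : T) (s : seq T).

Definition grel g : rel T := fun u v => (u, v) \in g.

(* [(a, s)] encodes the path [a :: s]; an [A]-[B] path meets [A] only in its
   first vertex and [B] only in its last one. *)
Definition linking_path g A B (w : T * seq T) : Prop :=
  [/\ w.1 \in A, path (grel g) w.1 w.2, last w.1 w.2 \in B, uniq (w.1 :: w.2) &
      {in w.2, forall v, v \notin A} /\
      {in w.1 :: w.2, forall v, v \in B -> v = last w.1 w.2}].

Definition separates g A B X : Prop :=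
  forall a s, a \in A -> path (grel g) a s -> last a s \in B ->
    exists2 v, v \in a :: s & v \in X.

Definition linkage g A B k (P : 'I_k -> T * seq T) : Prop :=
  (forall i, linking_path g A B (P i)) /\
  (forall i j, i != j -> forall v,
     v \in (P i).1 :: (P i).2 -> v \in (P j).1 :: (P j).2 -> False).

Lemma split_mem a v s : v \in a :: s ->
  exists s1 s2, s = s1 ++ s2 /\ last a s1 = v.
Proof.
rewrite inE => /orP [/eqP->|vs]; first by exists [::], s.
case/splitPr: vs => p1 p2; exists (rcons p1 v), p2.
by rewrite cat_rcons last_rcons.
Qed.

Lemma split_first_hit Z s a : has (mem Z) (a :: s) ->
  exists s1 s2, [/\ s = s1 ++ s2, last a s1 \in Z &
                   forall v, v \in belast a s1 -> v \notin Z].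
Proof.
elim: s a => [|b s IH] a /=.
  by rewrite orbF => aZ; exists [::], [::].
case aZ: (a \in Z) => /= h; first by exists [::], (b :: s).
have [s1 [s2 [-> l1 b1]]] := IH b h.
exists (b :: s1), s2; split => // v; rewrite /= inE => /orP [/eqP->|/b1 //].
by rewrite aZ.
Qed.

Lemma split_last_hit Z s a : has (mem Z) (a :: s) ->
  exists s1 s2, [/\ s = s1 ++ s2, last a s1 \in Z &
                   forall v, v \in s2 -> v \notin Z].
Proof.
elim: s a => [|b s IH] a /=.
  by rewrite orbF => aZ; exists [::], [::].
case h: (has (mem Z) (b :: s)) => /=.
  by have [s1 [s2 [-> l1 b1]]] := IH b h; exists (b :: s1), s2.
rewrite h orbF => aZ; exists [::], (b :: s); split => // v vs.
apply: contraFN h => vZ; move: vs; rewrite inE => /orP [/eqP <-|vs]; first by rewrite vZ.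
by apply/orP; right; apply/hasP; exists v.
Qed.

Lemma sub_grel_path g g' a s : g \subset g' ->
  path (grel g) a s -> path (grel g') a s.
Proof. by move=> /subsetP sg; apply: sub_path => u v; apply: sg. Qed.

Lemma grel_setD1_path_src g x y s a :
  path (grel g) a s -> x \notin belast a s -> path (grel (g :\ (x, y))) a s.
Proof.
elim: s a => [|b s IH] a //= /andP [ab ps]; rewrite inE negb_or => /andP [xa xs].
rewrite IH // andbT /grel !inE; rewrite /grel in ab; rewrite ab andbT.
by apply: contra xa => /eqP [->].
Qed.

Lemma grel_setD1_path_tgt g x y s a :
  path (grel g) a s -> y \notin s -> path (grel (g :\ (x, y))) a s.
Proof.
elim: s a => [|b s IH] a //= /andP [ab ps]; rewrite inE negb_or => /andP [yb ys].
rewrite IH // andbT /grel !inE; rewrite /grel in ab; rewrite ab andbT.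
by apply: contra yb => /eqP [_ ->].
Qed.

Lemma linking_subpath g A B a s : a \in A -> path (grel g) a s -> last a s \in B ->
  exists2 w, linking_path g A B w & {subset w.1 :: w.2 <= a :: s}.
Proof.
move=> aA pas lB.
have hasA : has (mem A) (a :: s) by apply/hasP; exists a; rewrite ?mem_head.
have [s1 [s2 [es a'A s2A]]] := split_last_hit hasA.
set a' := last a s1 in a'A s2A; move: pas lB; rewrite es cat_path last_cat.
case/andP=> _ ps2 lB.
have hasB : has (mem B) (a' :: s2) by apply/hasP; exists (last a' s2); rewrite ?mem_last.
have [t1 [t2 [et bB t1B]]] := split_first_hit hasB.
move: ps2; rewrite et cat_path => /andP [pt1 _].
have hB : {in a' :: t1, forall v, v \in B -> v = last a' t1}.
  move=> v; rewrite lastI mem_rcons inE => /orP [/eqP //|vb] vB.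
  by move: (t1B v vb); rewrite vB.
case: (shortenP pt1) bB hB => t pt ut st bB hB.
exists (a', t); last first.
  move=> v; rewrite inE => /orP [/eqP -> |/st vt1].
    by rewrite /a' -cat_cons mem_cat mem_last.
  by rewrite inE !mem_cat vt1 !orbT.
split => //=; split.
- by move=> v /st vt1; apply: s2A; rewrite et mem_cat vt1.
- move=> v; rewrite inE => /orP [/eqP -> | /st vt1]; apply: hB; first exact: mem_head.
  by rewrite inE vt1 orbT.
Qed.


Lemma separator_meet g A B S x y P Q v :
  separates g A B S -> linking_path g A (x |: S) P -> linking_path g (y |: S) B Q ->
  v \in P.1 :: P.2 -> v \in Q.1 :: Q.2 -> [/\ v \in S, v = last P.1 P.2 & v = Q.1].
Proof.
case: P => a s; case: Q => b t /= sepS [/= aA pas las uas [_ lastS]]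
  [/= bS pbt lbt ubt [innerS _]] vP vQ.
have [s1 [s2 [es ls]]] := split_mem vP.
have [t1 [t2 [et lt]]] := split_mem vQ.
move: pas; rewrite es cat_path => /andP [p1 p2].
move: pbt; rewrite et cat_path => /andP [_ q2].
have pw : path (grel g) a (s1 ++ t2) by rewrite cat_path p1 ls -lt.
have lw : last a (s1 ++ t2) \in B by rewrite last_cat ls -lt -last_cat -et.
have [w ww wS] := sepS a (s1 ++ t2) aA pw lw.
have vS : v \in S.
  move: ww; rewrite -cat_cons mem_cat => /orP [w1|w2]; last first.
    by have := innerS w; rewrite et mem_cat w2 orbT !inE wS orbT => /(_ isT).
  have wl : w = last a s.
    apply: lastS; last by rewrite !inE wS orbT.
    by rewrite es -cat_cons mem_cat w1.
  have s2_fresh : ~~ has (mem (a :: s1)) s2.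
    have : uniq ((a :: s1) ++ s2) by rewrite cat_cons -es.
    by rewrite cat_uniq => /and3P [].
  case: s2 es p2 wl s2_fresh => [|z s2] es p2 wl s2_fresh.
    by move: wS; rewrite wl es cats0 ls.
  case/hasP: s2_fresh; exists w => //.
  by rewrite wl es last_cat ls /= mem_last.
split => //; first by rewrite -es; apply: lastS; rewrite ?(inE, vS, orbT).
move: vQ; rewrite inE => /orP [/eqP //|vt].
by have := innerS v vt; rewrite !inE vS orbT.
Qed.

Lemma separates_setD1_src g A B S x y :
  separates (g :\ (x, y)) A B S -> separates g A B (x |: S).
Proof.
move=> sepS a s aA pas lB.
have [xin|xnin] := boolP (x \in a :: s); first by exists x; rewrite ?setU11.
have [|v vin vS] := sepS a s aA _ lB.
  by apply: grel_setD1_path_src pas _; apply: contra xnin; apply: mem_belast.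
by exists v; rewrite ?inE ?vS ?orbT.
Qed.

Lemma separates_setD1_tgt g A B S x y :
  separates (g :\ (x, y)) A B S -> separates g A B (y |: S).
Proof.
move=> sepS a s aA pas lB.
have [yin|ynin] := boolP (y \in a :: s); first by exists y; rewrite ?setU11.
have [|v vin vS] := sepS a s aA _ lB.
  by apply: grel_setD1_path_tgt pas _; apply: contra ynin => ys; rewrite inE ys orbT.
by exists v; rewrite ?inE ?vS ?orbT.
Qed.

(* Before its first visit to [Z], an [A]-[B] path uses no edge out of [x]. *)
Lemma separates_prefix g A B Z X x y : x \in Z -> separates g A B Z ->
  separates (g :\ (x, y)) A Z X -> separates g A B X.
Proof.
move=> xZ sepZ sepX a s aA pas lB.
have hasZ : has (mem Z) (a :: s).
  by have [v vin vZ] := sepZ a s aA pas lB; apply/hasP; exists v.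
have [s1 [s2 [es l1 b1]]] := split_first_hit hasZ.
move: pas; rewrite es cat_path => /andP [p1 _].
have [|v vin vX] := sepX a s1 aA _ l1.
  by apply: grel_setD1_path_src p1 _; apply/negP => /b1; rewrite xZ.
by exists v; rewrite // -cat_cons mem_cat vin.
Qed.

Lemma separates_suffix g A B Z X x y : y \in Z -> separates g A B Z ->
  separates (g :\ (x, y)) Z B X -> separates g A B X.
Proof.
move=> yZ sepZ sepX a s aA pas lB.
have hasZ : has (mem Z) (a :: s).
  by have [v vin vZ] := sepZ a s aA pas lB; apply/hasP; exists v.
have [s1 [s2 [es l1 b2]]] := split_last_hit hasZ.
move: pas lB; rewrite es cat_path last_cat => /andP [_ p2] lB.
have [|v vin vX] := sepX _ s2 l1 _ lB.
  by apply: grel_setD1_path_tgt p2 _; apply/negP => /b2; rewrite yZ.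
exists v => //; move: vin; rewrite inE => /orP [/eqP ->|vs2].
  by rewrite -cat_cons mem_cat mem_last.
by rewrite inE mem_cat vs2 !orbT.
Qed.

Lemma linkage_subset g g' A B k (P : 'I_k -> T * seq T) : g \subset g' ->
  linkage g A B P -> linkage g' A B P.
Proof.
move=> gg' [linkP disjP]; split => // i.
by have [? p ? ? ?] := linkP i; split => //; apply: sub_grel_path p.
Qed.

Lemma linkage_last_inj g A B k (P : 'I_k -> T * seq T) : linkage g A B P ->
  injective (fun i => last (P i).1 (P i).2).
Proof.
move=> [_ disjP] i j /= eij; have [// | ij] := eqVneq i j; exfalso.
by apply: (disjP i j ij (last (P i).1 (P i).2)); rewrite ?mem_last // eij mem_last.
Qed.

Lemma linkage_heads_onto g A B k (P : 'I_k -> T * seq T) : linkage g A B P -> #|A| <= k ->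
  {in A, forall a, exists j, (P j).1 = a}.
Proof.
move=> [linkP disjP] cardA.
have head_inj : injective (fun j => (P j).1).
  move=> i j /= eij; have [// | ij] := eqVneq i j; exfalso.
  by apply: (disjP i j ij (P i).1); rewrite ?mem_head // eij mem_head.
have /eqP <- : (fun j => (P j).1) @: [set: 'I_k] == A.
  rewrite eqEcard card_imset // cardsT card_ord cardA andbT.
  by apply/subsetP => v /imsetP [j _ ->]; have [] := linkP j.
by move=> v /imsetP [j _ ->]; exists j.
Qed.

Section Glue.
Variables (g : {set T * T}) (A B S : {set T}) (x y : T) (k : nat).
Variables P Q : 'I_k -> T * seq T.
Hypotheses (gxy : (x, y) \in g) (yS : y \notin S) (card_yS : #|y |: S| <= k).
Hypothesis sepS : separates (g :\ (x, y)) A B S.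
Hypothesis linkP : linkage (g :\ (x, y)) A (x |: S) P.
Hypothesis linkQ : linkage (g :\ (x, y)) (y |: S) B Q.

(* The paths of [P] end in [x |: S]; the one ending in [x] continues along
   [(x, y)] into the path of [Q] starting at [y], the others into the path of
   [Q] starting at their end. *)
Let e i := last (P i).1 (P i).2.
Let cross v := if v == x then y else v.
Let tau i := odflt i [pick j | (Q j).1 == cross (e i)].
Let tail i := if e i == x then y :: (Q (tau i)).2 else (Q (tau i)).2.

Lemma cross_inj : {in x |: S &, injective cross}.
Proof.
move=> u v uS vS; rewrite /cross.
have [-> | ux] := eqVneq u x; have [-> // | vx] := eqVneq v x.
- by move=> yv; move: vS; rewrite !inE (negbTE vx) -yv (negbTE yS).
- by move=> uy; move: uS; rewrite !inE (negbTE ux) uy (negbTE yS).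
- by [].
Qed.

Lemma cross_end_in i : cross (e i) \in y |: S.
Proof.
have [_ _ eSx _ _] := linkP.1 i; rewrite /cross; case: eqP => [_|/eqP ex].
  exact: setU11.
by move: eSx; rewrite !inE (negbTE ex) /= => ->; rewrite orbT.
Qed.

Lemma tau_head i : (Q (tau i)).1 = cross (e i).
Proof.
rewrite /tau; case: pickP => [j /eqP // | none].
have [j hj] := linkage_heads_onto linkQ card_yS (cross_end_in i).
by move: (none j); rewrite hj eqxx.
Qed.

Lemma joint_mem i v : v \in (P i).1 :: (P i).2 ++ tail i ->
  v \in (P i).1 :: (P i).2 \/ v \in (Q (tau i)).1 :: (Q (tau i)).2.
Proof.
rewrite -cat_cons mem_cat => /orP [-> | ]; first by left.
by rewrite tau_head /tail /cross; case: ifP => _ vin; right; rewrite ?inE ?vin ?orbT.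
Qed.

Lemma joint_linking i : exists2 w, linking_path g A B w &
  {subset w.1 :: w.2 <= (P i).1 :: (P i).2 ++ tail i}.
Proof.
have [aA pa _ _ _] := linkP.1 i; have [_ pb lb _ _] := linkQ.1 (tau i).
have sg : g :\ (x, y) \subset g := subsetDl _ _.
apply: linking_subpath => //.
  rewrite cat_path (sub_grel_path sg pa) /= -/(e i) /tail.
  move: pb; rewrite tau_head /cross; case: eqP => [ex | _] pb /=.
    by rewrite /grel ex gxy; apply: sub_grel_path sg pb.
  exact: sub_grel_path sg pb.
by rewrite last_cat -/(e i) /tail; move: lb; rewrite tau_head /cross; case: eqP.
Qed.

Lemma joint_disjoint i j v : i != j ->
  v \in (P i).1 :: (P i).2 ++ tail i -> v \in (P j).1 :: (P j).2 ++ tail j -> False.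
Proof.
have e_inj := linkage_last_inj linkP.
have eSx i' : e i' \in x |: S by have [] := linkP.1 i'.
have cross_S i' : cross (e i') \in S -> e i' = cross (e i').
  by rewrite /cross; case: eqP => // _ yS'; move: yS; rewrite yS'.
have P_Q_disjoint i' j' : i' != j' -> v \in (P i').1 :: (P i').2 ->
    v \in (Q (tau j')).1 :: (Q (tau j')).2 -> False.
  move=> ij vP vQ.
  have [vS ve] := separator_meet sepS (linkP.1 i') (linkQ.1 (tau j')) vP vQ.
  rewrite tau_head => vc; move: vS; rewrite vc => /cross_S ej.
  by move: ij; rewrite (e_inj i' j' (etrans (esym ve) (etrans vc (esym ej)))) eqxx.
move=> ij /joint_mem [vPi|vQi] /joint_mem [vPj|vQj].
- exact: linkP.2 i j ij v vPi vPj.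
- exact: P_Q_disjoint i j ij vPi vQj.
- by apply: (P_Q_disjoint j i) vPj vQi; rewrite eq_sym.
- case: (boolP (tau i == tau j)) => [/eqP tij | tij].
    2: exact: linkQ.2 _ _ tij v vQi vQj.
  have eij : cross (e i) = cross (e j) by rewrite -!tau_head tij.
  by move: ij; rewrite (e_inj i j (cross_inj (eSx i) (eSx j) eij)) eqxx.
Qed.

Lemma linkage_glue : exists P' : 'I_k -> T * seq T, linkage g A B P'.
Proof.
have [P' linkP' subP'] := fin_all_exists2 joint_linking.
exists P'; split => // i j ij v vi vj.
exact: joint_disjoint ij (subP' i v vi) (subP' j v vj).
Qed.

End Glue.

Lemma menger_no_edges A B k : (forall X, separates set0 A B X -> k <= #|X|) ->
  exists P : 'I_k -> T * seq T, linkage set0 A B P.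
Proof.
move=> minX.
have card_AB : k <= #|A :&: B|.
  apply: minX => a [|b s] aA //=; last by rewrite /grel inE.
  by move=> _ aB; exists a; rewrite ?inE ?aA ?aB.
pose P (i : 'I_k) := (enum_val (widen_ord card_AB i), [::] : seq T).
exists P; split.
  move=> i; have := enum_valP (widen_ord card_AB i); rewrite inE => /andP [aA aB].
  by split => //=; split => // v; rewrite inE => /eqP ->.
move=> i j ij v /=; rewrite !inE => /eqP -> /eqP /enum_val_inj /(congr1 val) /=.
by move=> /val_inj eij; move: ij; rewrite eij eqxx.
Qed.

(* Edge-deletion induction: either deleting an edge [(x, y)] keeps all
   separators large, or a small separator [S] of the smaller graph yields the
   large separators [x |: S] and [y |: S] of [g], across which two linkages of
   the smaller graph are glued. *)
Theorem menger g A B k : (forall X, separates g A B X -> k <= #|X|) ->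
  exists P : 'I_k -> T * seq T, linkage g A B P.
Proof.
have [n] := ubnP #|g|; elim: n g A B => // n IH g A B /ltnSE card_g minX.
case: (set_0Vmem g) => [g0 | [[x y] gxy]].
  by move: minX; rewrite g0; apply: menger_no_edges.
have card_g' : #|g :\ (x, y)| < n by move: card_g; rewrite (cardsD1 (x, y) g) gxy.
have [minX' | ] := classic (forall X, separates (g :\ (x, y)) A B X -> k <= #|X|).
  have [P linkP] := IH _ A B card_g' minX'.
  by exists P; apply: linkage_subset (subsetDl _ _) linkP.
move=> not_minX'; have [S sepS ltS] : exists2 S, separates (g :\ (x, y)) A B S & #|S| < k.
  apply: NNPP => none; apply: not_minX' => X sepX; rewrite leqNgt; apply/negP => ltX.
  by apply: none; exists X.
have sepx := separates_setD1_src sepS; have sepy := separates_setD1_tgt sepS.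
have yS : y \notin S.
  by apply/negP => yS; move: (minX _ sepy); rewrite cardsU1 yS leqNgt ltS.
have card_yS : #|y |: S| <= k by rewrite cardsU1 yS.
have [P linkP] : exists P : 'I_k -> T * seq T, linkage (g :\ (x, y)) A (x |: S) P.
  by apply: IH card_g' _ => X /(separates_prefix (setU11 x S) sepx) /minX.
have [Q linkQ] : exists Q : 'I_k -> T * seq T, linkage (g :\ (x, y)) (y |: S) B Q.
  by apply: IH card_g' _ => X /(separates_suffix (setU11 y S) sepy) /minX.
exact: linkage_glue gxy yS card_yS sepS linkP linkQ.
Qed.

End Menger.

Definition avoiding_edges (T : finType) (E : rel T) (Z : {set T}) : {set T * T} :=
  [set uv | [&& E uv.1 uv.2, uv.1 \notin Z & uv.2 \notin Z]].

Definition in_neighbours (T : finType) (E : rel T) (Z : {set T}) (y : T) : {set T} :=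
  [set u | (u \notin Z) && E u y].

Lemma avoiding_edges_path (T : finType) (E : rel T) Z a s :
  path (grel (avoiding_edges E Z)) a s -> path E a s /\ [disjoint s & Z].
Proof.
elim: s a => [|b s IH] a /=; first by rewrite disjoint_has.
rewrite /grel /avoiding_edges inE disjoint_cons => /andP [/and3P [ab _ bZ] ps].
by have [-> ->] := IH b ps; rewrite ab bZ.
Qed.

Lemma linking_path_append (T : finType) (E : rel T) (X F : {set T}) y w :
  y \notin X -> y \notin F -> [disjoint X & F] ->
  linking_path (avoiding_edges E (y |: F)) X (in_neighbours E (y |: F) y) w ->
  Xy_path E X y (w.1 :: rcons w.2 y) /\ [disjoint w.1 :: rcons w.2 y & F].
Proof.
move=> yX yF XF [aX pw lw uw _]; have [pE sZ] := avoiding_edges_path pw.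
move: lw; rewrite /in_neighbours inE => /andP [lZ lE].
have yw : y \notin w.1 :: w.2.
  rewrite inE negb_or (disjointFl sZ) ?setU11 // andbT.
  by apply: contraNneq yX => ->.
split.
  have : uniq (rcons (w.1 :: w.2) y) by rewrite rcons_uniq yw uw.
  by rewrite /= aX rcons_path pE lE last_rcons eqxx.
rewrite disjoint_cons (disjointFr XF aX) -cats1 disjoint_cat disjoint_cons yF disjoint0.
by rewrite (disjointWr _ sZ) // subsetUr.
Qed.

Lemma linkage_append_target (T : finType) (E : rel T) (X F : {set T}) y k
    (P : 'I_k.+1 -> T * seq T) :
  y \notin X -> y \notin F -> [disjoint X & F] ->
  linkage (avoiding_edges E (y |: F)) X (in_neighbours E (y |: F) y) P ->
  exists ps : seq (seq T),
    [/\ size ps = k.+1,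
        forall p, p \in ps -> Xy_path E X y p /\ [disjoint p & F] &
        forall i j, i < size ps -> j < size ps -> i != j ->
          forall v, v \in nth [::] ps i -> v \in nth [::] ps j -> v = y].
Proof.
move=> yX yF XF [linkP disjP].
pose W (i : 'I_k.+1) := (P i).1 :: rcons (P i).2 y.
exists (mkseq (fun n => W (inord n)) k.+1); split; first by rewrite size_mkseq.
  by move=> p /mapP [n _ ->]; apply: linking_path_append.
move=> i j; rewrite size_mkseq => ltik ltjk ij v; rewrite !nth_mkseq //.
have W_mem l : v \in W l -> v = y \/ v \in (P l).1 :: (P l).2.
  by rewrite /W -rcons_cons mem_rcons inE => /orP [/eqP | ]; [left | right].
move=> /W_mem [// | vi] /W_mem [// | vj]; exfalso.
apply: (disjP (inord i) (inord j) _ v vi vj).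
by apply: contra ij => /eqP /(congr1 val) /=; rewrite !inordK // => ->.
Qed.

Lemma condition1_rest (T : finType) (E : rel T) f (L R F : {set T}) :
  condition1 E f -> [disjoint L & R] -> [disjoint L & F] -> [disjoint R & F] ->
  L != set0 -> R != set0 -> #|F| <= f ->
  reaches_f E f (L :|: ~: (L :|: R :|: F)) R ||
  reaches_f E f (R :|: ~: (L :|: R :|: F)) L.
Proof.
move=> cond LR LF RF L0 R0 cardF; apply: (cond _ _ _ F) => //.
- by rewrite disjoint_subset; apply/subsetP => v vL; rewrite !inE vL.
- by rewrite disjoint_sym disjoint_subset; apply/subsetP => v vR; rewrite !inE vR !orbT.
- by rewrite disjoint_sym disjoint_subset; apply/subsetP => v vF; rewrite !inE vF !orbT.
- apply/setP => v; rewrite !inE.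
  by case: (v \in L); case: (v \in R); case: (v \in F).
Qed.

Lemma source_component_disjoint (T : finType) (R : rel T) (F S : {set T}) :
  source_component R F S -> [disjoint S & F].
Proof.
move=> [[i _ ->] _]; apply/pred0P => v /=; apply/negP => /andP [].
by rewrite inE => /and3P [/negbTE ->].
Qed.

Lemma source_component_neq0 (T : finType) (R : rel T) (F S : {set T}) :
  source_component R F S -> S != set0.
Proof. by move=> [[i iF ->] _]; apply/set0Pn; exists i; rewrite inE iF !connect0. Qed.

Section SourceSeparator.
Variables (T : finType) (E : rel T) (f : nat) (F F1 S : {set T}) (y0 : T).
Hypotheses (cond : condition1 E f) (cardF : #|F| <= f) (cardF1 : #|F1| <= f).
Hypothesis sourceS : source_component (redE E F F1) F S.
Hypotheses (y0F : y0 \notin F) (y0S : y0 \notin S).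

Let g := avoiding_edges E (y0 |: F).
Let B := in_neighbours E (y0 |: F) y0.
Let SF : [disjoint S & F] := source_component_disjoint sourceS.

Section SmallSeparator.
Variable X : {set T}.
Hypothesis sepX : separates g S B X.

Let r : rel T := fun u v => [&& (u, v) \in g, u \notin X & v \notin X].
Let R := y0 |: [set v | [&& v \notin X, v \notin F &
                         [exists b in B, (b \notin X) && connect r v b]]].
Let C := ~: (S :|: R :|: F).

Lemma r_path a p : path r a p -> path (grel g) a p /\ [disjoint p & X].
Proof.
elim: p a => [|b p IH] a /=; first by rewrite disjoint_has.
case/andP=> /and3P [ab _ bX] /IH [pb dp]; split; first by rewrite /grel ab.
by rewrite disjoint_cons bX dp.
Qed.

Lemma disjoint_source_R : [disjoint S & R].
Proof.
apply/pred0P => v /=; apply/negP => /andP [vS].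
rewrite !inE => /orP [/eqP v0 | /and3P [vX _ /existsP [b /and3P [bB bX]]]].
  by move: y0S; rewrite -v0 vS.
case/connectP=> p /r_path [pg pX] lp; rewrite lp in bB.
have [w] := sepX vS pg bB.
rewrite inE => /orP [/eqP -> | wp]; first by rewrite (negbTE vX).
by rewrite (disjointFr pX wp).
Qed.

Lemma disjoint_R_F : [disjoint R & F].
Proof.
apply/pred0P => v /=; apply/negP => /andP [+ vF].
by rewrite !inE vF andbF orbF => /eqP v0; move: y0F; rewrite -v0 vF.
Qed.

(* An edge into [R] from a vertex outside [X] would put that vertex in [R]. *)
Lemma edges_into_R : [set i in S :|: C | [exists j in R, E i j]] \subset X.
Proof.
apply/subsetP => i; rewrite inE => /andP [iSC /existsP [j /andP [jR Eij]]].
have [iR iF] : i \notin R /\ i \notin F.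
  case/setUP: iSC => [iS | ].
    by rewrite (disjointFr disjoint_source_R iS) (disjointFr SF iS).
  by rewrite in_setC !in_setU !negb_or => /andP [/andP [_ ->] ->].
have i0 : i != y0 by apply: contraNneq iR => ->; rewrite setU11.
apply/negPn/negP => iX; move/negP: iR; apply.
rewrite in_setU1 (negbTE i0) inE iX iF /=.
have [j0 | j0] := eqVneq j y0.
  apply/existsP; exists i; rewrite connect0 iX.
  by rewrite /B /in_neighbours !inE negb_or i0 iF -j0 Eij.
move: jR; rewrite in_setU1 (negbTE j0) inE.
case/and3P => jX jF /existsP [b /and3P [bB bX cjb]].
apply/existsP; exists b; rewrite bB bX /=; apply: connect_trans cjb; apply: connect1.
by rewrite /r /g /avoiding_edges inE /= Eij !inE !negb_or i0 iF j0 jF iX jX.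
Qed.

(* An edge into the source component [S] must have been cut in the reduced graph. *)
Lemma edges_into_source : [set i in R :|: C | [exists j in S, E i j]] \subset F1.
Proof.
apply/subsetP => i; rewrite inE => /andP [iRC /existsP [j /andP [jS Eij]]].
have [iS iF] : i \notin S /\ i \notin F.
  case/setUP: iRC => [iR | ].
    by rewrite (disjointFl disjoint_source_R iR) (disjointFr disjoint_R_F iR).
  by rewrite in_setC !in_setU !negb_or => /andP [/andP [-> _] ->].
apply/negPn/negP => iF1; have [_ no_entry] := sourceS.
move: (no_entry i j iF iS jS); rewrite connect1 //.
by rewrite /redE Eij iF iF1 (disjointFr SF jS).
Qed.

Lemma separator_large : f < #|X|.
Proof.
rewrite ltnNge; apply/negP => cardX.
have R0 : R != set0 by apply/set0Pn; exists y0; rewrite setU11.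
have := condition1_rest cond disjoint_source_R SF disjoint_R_F
  (source_component_neq0 sourceS) R0 cardF.
case/orP.
- move/leq_trans/(_ (subset_leq_card edges_into_R)).
  by move/leq_trans/(_ cardX); rewrite ltnn.
- move/leq_trans/(_ (subset_leq_card edges_into_source)).
  by move/leq_trans/(_ cardF1); rewrite ltnn.
Qed.

End SmallSeparator.
End SourceSeparator.

Theorem corollary2 (T : finType) (E : rel T) (f : nat)
  (Hsimple : irreflexive E) (Hcond : condition1 E f)
  (F F1 S : {set T})
  (HF1sub : F1 \subset ~: F) (HF : #|F| <= f) (HF1 : #|F1| <= f)
  (HS : source_component (redE E F F1) F S) :
  strongly_reaches E f S (~: (F :|: S)) F.
Proof.
right => y0; rewrite !inE negb_or => /andP [y0F y0S].
have [P linkP] := menger (separator_large Hcond HF HF1 HS y0F y0S).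
exact: linkage_append_target y0S y0F (source_component_disjoint HS) linkP.
Qed.
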